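(* Let $n\geq 4$. The wheel $W_n$ is not strong cop-win (i.e. not strong $1$-cop-win), but it is strong 2-cop-win, and $\lim_{m\to\infty}\mathrm{capt}_2(W_n,m)=n-3$.
   Context: The wheel $W_n$ ($n\geq 4$) is the cycle $C_{n-1}$ together with one additional vertex adjacent to all cycle vertices. All graphs are reflexive (a player may stay in place). The game of $k$ cops and $m$ robbers on $G$: in round 0 the cops first choose starting vertices, then the robbers choose theirs. In each round $i\geq 1$, all $k$ cops move (each to an adjacent vertex or staying), then all $m$ robbers move likewise. Several players may occupy the same vertex. Whenever a cop and some robbers occupy the same vertex, those robbers are captured and take no further part in the game. Both sides have full information. The cops win if all robbers are captured after finitely many rounds. $G$ is $k$-cop-win if $k$ cops can always win against one robber. For a $k$-cop-win graph $G$, $\mathrm{capt}_k(G,m)$ is the index of the round in which the last robber is captured when $k$ cops play to minimize this index and $m$ robbers play to maximize it. $G$ is strong $k$-cop-win if $\lim_{m\to\infty}\mathrm{capt}_k(G,m)$ exists (and is finite). *)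

From mathcomp Require Import all_boot.
Set Implicit Arguments. Unset Strict Implicit. Unset Printing Implicit Defensive.

Section Game.
Variables (V : finType) (adj : rel V).

(* Robber status: Some v = robber at v, still in the game; None = captured. *)

Definition capture (k m : nat) (c : {ffun 'I_k -> V}) (r : {ffun 'I_m -> option V})
  : {ffun 'I_m -> option V} :=
  [ffun j => if r j is Some v then (if [exists i, c i == v] then None else Some v)
             else None].

Definition all_captured (m : nat) (r : {ffun 'I_m -> option V}) : Prop :=
  forall j, r j = None.

(* cops_win_within k m t c r : in the position (c, r) reached at the end of some
   round, the cops can force that all robbers are captured within at most t further
   rounds (a round = all cops move, captures, all remaining robbers move, captures). *)
Fixpoint cops_win_within (k m t : nat) (c : {ffun 'I_k -> V})
  (r : {ffun 'I_m -> option V}) : Prop :=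
  match t with
  | 0 => all_captured r
  | t'.+1 =>
      all_captured r \/
      exists c' : {ffun 'I_k -> V},
        (forall i, adj (c i) (c' i)) /\
        forall rm : {ffun 'I_m -> V},
          (forall j v, capture c' r j = Some v -> adj v (rm j)) ->
          cops_win_within t' c'
            (capture c' [ffun j => omap (fun _ => rm j) (capture c' r j)])
  end.

(* The k cops can capture all m robbers by the end of round t (round 0: cops
   place, then robbers place). *)
Definition capt_within (k m t : nat) : Prop :=
  exists c0 : {ffun 'I_k -> V},
    forall r0 : {ffun 'I_m -> V},
      cops_win_within t c0 (capture c0 [ffun j => Some (r0 j)]).

Definition is_capt (k m t : nat) : Prop :=
  capt_within k m t /\ forall t', t' < t -> ~ capt_within k m t'.

Definition k_cop_win (k : nat) : Prop := exists t, capt_within k 1 t.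

(* lim_{m -> oo} capt_k(G, m) = L  (integer valued, so eventually constant) *)
Definition capt_limit (k L : nat) : Prop :=
  exists M, forall m, M <= m -> is_capt k m L.

Definition strong_k_cop_win (k : nat) : Prop :=
  k_cop_win k /\ exists L, capt_limit k L.

End Game.

(* The wheel W_n on vertices 'I_n: vertex 0 is the hub, vertices 1..n-1 form the
   cycle C_{n-1} (i ~ i+1 for 1 <= i <= n-2, and 1 ~ n-1).  Reflexive. *)
Definition wheel_adj (n : nat) : rel 'I_n :=
  fun u v =>
    [|| u == v, val u == 0, val v == 0 |
     [&& 0 < val u, 0 < val v &
      [|| val v == (val u).+1, val u == (val v).+1,
          (val u == 1) && (val v == n.-1) | (val v == 1) && (val u == n.-1)]]].
Arguments wheel_adj n : clear implicits.

From mathcomp Require Import all_boot zify.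

Set Implicit Arguments.
Unset Strict Implicit.
Unset Printing Implicit Defensive.

(* With #|V|^(t+1) robbers, one robber can be assigned to every sequence of
   t+1 target vertices, moving to its next target whenever that move is legal
   and safe.  After each round the survivors then occupy the whole escape set:
   the vertices free of cops adjacent to a free vertex of the previous escape
   set.  So the robbers last t rounds as long as the escape sets stay nonempty.
   On the wheel, an escape set S with at least three vertices, missing some
   vertex and containing at most two cops, has a free vertex adjacent to a
   vertex outside S: through the hub if it is free, otherwise along the rim
   with the second cop's vertex cut out.  Hence each round costs the escape set
   at most (number of cops - 1) vertices: against one cop it never shrinks, and
   against two cops it starts with n - 2 vertices and survives n - 4 rounds.
   Conversely, two cops win in n - 3 rounds, one alternating between the hub
   and a rim vertex while the other sweeps the rim. *)

Lemma exists_boundary_step (P : pred nat) i j :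
  i <= j -> P i -> ~~ P j -> exists2 l, i <= l < j & P l && ~~ P l.+1.
Proof.
move=> le_ij Pi; elim: j le_ij => [|j IHj]; first by rewrite leqn0 => /eqP <-; rewrite Pi.
rewrite leq_eqVlt => /orP [/eqP <-|le_ij]; first by rewrite Pi.
move=> nPj1; case Pj: (P j); first by exists j; rewrite ?ltnSn ?andbT ?Pj.
by have [l /andP [il lj] Pl] := IHj le_ij (negbT Pj); exists l => //; rewrite il ltnS ltnW.
Qed.

Section Robbers.
Variables (V : finType) (adj : rel V).
Hypothesis adj_refl : reflexive adj.

Definition cop_set k (c : {ffun 'I_k -> V}) : {set V} := [set c i | i : 'I_k].

Lemma mem_cop_set k (c : {ffun 'I_k -> V}) v : (v \in cop_set c) = [exists i, c i == v].
Proof. by apply/imsetP/existsP => [[i _ ->]|[i /eqP <-]]; exists i. Qed.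

Lemma card_cop_set k (c : {ffun 'I_k -> V}) : #|cop_set c| <= k.
Proof. by rewrite (leq_trans (leq_imset_card _ _)) ?card_ord. Qed.

Definition escape_step k (c : {ffun 'I_k -> V}) (S : {set V}) : {set V} :=
  [set w | (w \notin cop_set c) && [exists s in S :\: cop_set c, adj s w]].

Lemma cop_in_cop_set k (c : {ffun 'I_k -> V}) i : c i \in cop_set c.
Proof. exact: imset_f. Qed.

Lemma cop_notin_escape_step k (c : {ffun 'I_k -> V}) S i : c i \notin escape_step c S.
Proof. by rewrite inE cop_in_cop_set. Qed.

Lemma capture_Some k m (c : {ffun 'I_k -> V}) (r : {ffun 'I_m -> option V}) j v :
  capture c r j = Some v <-> r j = Some v /\ v \notin cop_set c.
Proof.
rewrite /capture ffunE mem_cop_set; case: (r j) => [u|]; last by split => // -[].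
case: ifP => cop_u; split => //.
- by case=> [[<-]]; rewrite cop_u.
- by case=> <-; rewrite cop_u.
- by case=> [[<-]].
Qed.

Lemma subD_escape_step k (c : {ffun 'I_k -> V}) S : S :\: cop_set c \subset escape_step c S.
Proof.
apply/subsetP => s sSC; rewrite inE; move: (sSC); rewrite inE => /andP [-> _].
by apply/existsP; exists s; rewrite sSC adj_refl.
Qed.

Lemma card_escape_step k (c : {ffun 'I_k -> V}) (S : {set V}) :
  (cop_set c \subset S -> exists r w, [/\ r \in S :\: cop_set c, w \notin S & adj r w]) ->
  #|S| < #|escape_step c S| + #|cop_set c|.
Proof.
set C := cop_set c => boundary.
have SC_step : S :\: C \subset escape_step c S := subD_escape_step c S.
have cardS := cardsID C S.
have [CS|CnS] := boolP (C \subset S); last first.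
  have : S :&: C \proper C.
    by rewrite properEneq subsetIr andbT; apply: contraNneq CnS => <-; apply: subsetIl.
  by move/proper_card; have := subset_leq_card SC_step; lia.
have [r [w [rSC wS rw]]] := boundary CS.
have wSC : w \notin S :\: C by rewrite inE (negbTE wS) andbF.
have w_step : w |: (S :\: C) \subset escape_step c S.
  rewrite subUset SC_step andbT sub1set inE; apply/andP; split.
    by apply: contra wS; apply: (subsetP CS).
  by apply/existsP; exists r; rewrite rSC.
move: (subset_leq_card w_step) cardS; rewrite cardsU1 wSC (setIidPr CS).
by have := subset_leq_card CS; lia.
Qed.

Fixpoint escapes k t (S : {set V}) : Prop :=
  S != set0 /\
  if t is t'.+1 then forall c : {ffun 'I_k -> V}, escapes k t' (escape_step c S) else True.

Lemma escapes_neq0 k t S : escapes k t S -> S != set0.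
Proof. by case: t => [|t] []. Qed.

Section Plans.
Variables (k m T : nat) (plan : 'I_m -> nat -> V).

Definition covers i (r : {ffun 'I_m -> option V}) (S : {set V}) : Prop :=
  forall w, w \in S -> forall g : nat -> V,
    exists j, r j = Some w /\ forall l, i <= l < T -> plan j l = g l.

Definition follow_plan i (c : {ffun 'I_k -> V}) (r : {ffun 'I_m -> option V}) :
  {ffun 'I_m -> V} :=
  [ffun j => if r j is Some s then
               (if adj s (plan j i) && (plan j i \notin cop_set c) then plan j i else s)
             else plan j i].

Lemma follow_plan_adj i (c : {ffun 'I_k -> V}) r j v :
  capture c r j = Some v -> adj v (follow_plan i c r j).
Proof. by case/capture_Some => rj _; rewrite ffunE rj; case: ifP => [/andP []|]. Qed.

Lemma covers_follow_plan i (c : {ffun 'I_k -> V}) r S : i < T -> covers i r S ->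
  covers i.+1
    (capture c [ffun j => omap (fun _ => follow_plan i c r j) (capture c r j)])
    (escape_step c S).
Proof.
move=> lt_iT covS w; rewrite inE => /andP [wC /existsP [s /andP [sSC sw]]] g.
move: sSC; rewrite inE => /andP [sC sS].
have [j [rj plan_j]] := covS s sS (fun l => if l == i then w else g l).
have capt_j : capture c r j = Some s by apply/capture_Some.
exists j; split.
  apply/capture_Some; split => //.
  by rewrite ffunE capt_j /= ffunE rj plan_j ?eqxx ?leqnn // sw wC.
move=> l /andP [lt_il lt_lT]; rewrite plan_j ?(ltnW lt_il) //.
by rewrite (gtn_eqF lt_il).
Qed.

Lemma covers_not_all_captured i r S : covers i r S -> S != set0 -> ~ all_captured r.
Proof.
move=> covS /set0Pn [w wS] none.
by have [j [+ _]] := covS w wS (fun _ => w); rewrite none.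
Qed.

Lemma escapes_survive t i (c : {ffun 'I_k -> V}) r S :
  i + t <= T -> covers i r S -> escapes k t S -> ~ cops_win_within adj t c r.
Proof.
elim: t i c r S => [|t IHt] i c r S le_T covS [SN escS] /=.
  exact: covers_not_all_captured covS SN.
case=> [|[c' [_ win]]]; first exact: covers_not_all_captured covS SN.
apply: (IHt i.+1 c' _ (escape_step c' S) _ _ (escS c') (win _ (@follow_plan_adj i c' r))).
  by rewrite addSnnS.
by apply: covers_follow_plan; rewrite // -addn1 (leq_trans _ le_T) ?leq_add2l.
Qed.

End Plans.

Lemma escapes_not_capt_within k m t :
  (forall c : {ffun 'I_k -> V}, escapes k t (~: cop_set c)) -> #|V| ^ t.+1 <= m ->
  ~ capt_within adj k m t.
Proof.
move=> esc le_m [c0 win].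
have /escapes_neq0/set0Pn [v0 _] := esc c0.
pose F := {ffun 'I_t.+1 -> V}.
pose plan (j : 'I_m) l : V :=
  if insub l is Some o then (nth [ffun=> v0] (enum F) j : F) o else v0.
have plan_onto (g : nat -> V) : exists j, forall l, l < t.+1 -> plan j l = g l.
  pose f : F := [ffun o => g (val o)].
  have lt_f : index f (enum F) < m.
    have cardF : #|F| = #|V| ^ t.+1 by rewrite card_ffun card_ord.
    by rewrite (leq_trans _ le_m) // -cardF cardE index_mem mem_enum.
  exists (Ordinal lt_f) => l lt_l.
  by rewrite /plan /= nth_index ?mem_enum // insubT /= ffunE.
apply: (escapes_survive (T := t.+1) (plan := plan) (i := 1) _ _ (esc c0)
          (win [ffun j => plan j 0])) => //.
move=> w; rewrite inE => wC g.
have [j plan_j] := plan_onto (fun l => if l == 0 then w else g l).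
exists j; split; first by apply/capture_Some; rewrite !ffunE plan_j.
by case=> [|l] // /andP [_ lt_l]; rewrite plan_j.
Qed.

End Robbers.

Section Wheel.
Variable p : nat.
Hypothesis p_ge3 : 3 <= p.
Local Notation V := 'I_p.+1.
Local Notation adj := (wheel_adj p.+1).

Lemma wheel_adjE (u v : V) : adj u v =
  [|| u == v :> nat, u == 0 :> nat, v == 0 :> nat |
     [&& 0 < u, 0 < v &
      [|| v == u.+1 :> nat, u == v.+1 :> nat,
          (u == 1 :> nat) && (v == p :> nat) | (v == 1 :> nat) && (u == p :> nat)]]].
Proof. by []. Qed.

Lemma wheel_adj_refl : reflexive adj.
Proof. by move=> v; rewrite wheel_adjE eqxx. Qed.

Lemma wheel_adj_sym : symmetric adj.
Proof. by move=> u v; rewrite !wheel_adjE; apply/idP/idP; lia. Qed.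

Definition hub : V := ord0.

Lemma hub_adj (v : V) : adj hub v.
Proof. by rewrite wheel_adjE eqxx orbT. Qed.

(* For 0 < b <= p, [arc b 0], ..., [arc b (p - 2)] walk the rim from b + 1
   round to b - 1. *)
Definition arc (b i : nat) : V := inord (if b + i < p then b + i + 1 else b + i + 1 - p).

Lemma val_arc b i : 0 < b <= p -> i <= p - 2 ->
  arc b i = (if b + i < p then b + i + 1 else b + i + 1 - p) :> nat.
Proof. by move=> b_range i_le; rewrite inordK //; case: ifP; lia. Qed.

Lemma arc_adj b i : 0 < b <= p -> i < p - 2 -> adj (arc b i) (arc b i.+1).
Proof.
move=> b_range lt_i; rewrite wheel_adjE !val_arc //; try lia.
by case: ifP; case: ifP; lia.
Qed.

Lemma arc_avoids b i : 0 < b <= p -> i <= p - 2 ->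
  (arc b i != hub) && (arc b i != b :> nat).
Proof. by move=> b_range le_i; rewrite -val_eqE /= val_arc //; case: ifP; lia. Qed.

Lemma arc_onto b (v : V) : 0 < b <= p -> v != hub -> v != b :> nat ->
  exists2 i, i <= p - 2 & arc b i = v.
Proof.
move=> b_range v_hub v_b; have lt_v := ltn_ord v.
have v_pos : 0 < v by rewrite lt0n.
exists (if b < v then v - b - 1 else v + p - b - 1); first by case: ifP; lia.
by apply: ord_inj; case: ifP => lt_bv; rewrite val_arc //; try lia; case: ifP; lia.
Qed.

Lemma wheel_boundary (S C : {set V}) r0 x :
  C \subset S -> #|C| <= 2 -> r0 \in S :\: C -> x \notin S ->
  exists r w, [/\ r \in S :\: C, w \notin S & adj r w].
Proof.
move=> CS C2 r0SC xS.
have [hubSC|hub_SC] := boolP (hub \in S :\: C); first by exists hub, x; rewrite hub_adj.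
have [hubS|hub_S] := boolP (hub \in S); last first.
  by exists r0, hub; rewrite wheel_adj_sym hub_adj.
have hubC : hub \in C by move: hub_SC; rewrite inE hubS andbT negbK.
(* The hub is a cop; cut the rim at the other cop (or anywhere off x and r0)
   and walk from r0 to x. *)
have [b [b_hub b_x b_r0 Cb]] :
    exists b, [/\ b != hub, b != x, b != r0 & C \subset [set hub; b]].
  have [C_hub|[b]] := set_0Vmem (C :\ hub).
    have : 0 < #|~: [set hub; x; r0]|.
      by rewrite cardsCs setCK card_ord -setUA cardsU1 cards2; lia.
    case/card_gt0P => b; rewrite !inE => /norP [/norP [b_hub b_x] b_r0].
    exists b; split=> //; apply/subsetP => y yC; rewrite !inE.
    by apply/orP; left; apply: contraT => y_hub; rewrite -(in_set0 y) -C_hub !inE y_hub.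
  rewrite !inE => /andP [b_hub bC].
  exists b; split=> //.
  - by apply: (contraNneq _ xS) => <-; apply: (subsetP CS).
  - by move: r0SC; rewrite inE => /andP [r0C _]; apply: (contraNneq _ r0C) => <-.
  have hub_bC : [set hub; b] \subset C by rewrite subUset !sub1set hubC bC.
  have /eqP <- // : [set hub; b] == C.
  by rewrite eqEcard hub_bC cards2 eq_sym b_hub.
have b_range : 0 < b <= p by rewrite lt0n [_ != _]b_hub -ltnS ltn_ord.
have r0C : r0 \notin C by move: r0SC; rewrite inE => /andP [].
have [ir le_ir arc_r0] : exists2 i, i <= p - 2 & arc b i = r0.
  apply: arc_onto => //; last by rewrite eq_sym.
  by apply: (contraNneq _ r0C) => ->.
have [ix le_ix arc_x] : exists2 i, i <= p - 2 & arc b i = x.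
  apply: arc_onto => //; last by rewrite eq_sym.
  by apply: (contraNneq _ xS) => ->.
have arc_SC l : l <= p - 2 -> arc b l \in S -> arc b l \in S :\: C.
  move=> le_l arcS; rewrite inE arcS andbT.
  have /andP [arc_hub arc_b] := arc_avoids b_range le_l.
  by apply/negP => /(subsetP Cb); rewrite !inE (negbTE arc_hub) -val_eqE (negbTE arc_b).
have r0S : r0 \in S by move: r0SC; rewrite inE => /andP [].
have [le_rx|lt_xr] := leqP ir ix.
  have := exists_boundary_step (P := fun l => arc b l \in S) le_rx.
  rewrite /= arc_r0 arc_x => /(_ r0S xS) [l /andP [_ lt_l] /andP [inS outS]].
  have lt_lp : l < p - 2 := leq_trans lt_l le_ix.
  exists (arc b l), (arc b l.+1); split => //; first exact: arc_SC (ltnW lt_lp) inS.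
  exact: arc_adj.
have := exists_boundary_step (P := fun l => arc b l \notin S) (ltnW lt_xr).
rewrite /= arc_r0 arc_x negbK => /(_ xS r0S) [l /andP [_ lt_l] /andP [outS inS]].
have lt_lp : l < p - 2 := leq_trans lt_l le_ir.
exists (arc b l.+1), (arc b l); split => //; first exact: arc_SC lt_lp (negbNE inS).
by rewrite wheel_adj_sym arc_adj.
Qed.

Lemma escapes_wheel k t (S : {set _}) : 0 < k <= 2 -> S != setT ->
  3 + (k - 1) * t <= #|S| + (k - 1) -> escapes adj k t S.
Proof.
move=> k12; elim: t S => [|t IHt] S ST cardS; first by split=> //; rewrite -card_gt0; lia.
move: cardS; rewrite mulnSr => cardS; split; first by rewrite -card_gt0; nia.
move=> c; have Ck := card_cop_set c.
have /subsetPn [x _ xS] : ~~ (setT \subset S) by rewrite subTset.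
have grow : #|S| < #|escape_step adj c S| + #|cop_set c|.
  apply: (card_escape_step wheel_adj_refl) => CS.
  have /card_gt0P [r0 r0SC] : 0 < #|S :\: cop_set c|.
    by have := cardsID (cop_set c) S; rewrite (setIidPr CS); lia.
  by apply: wheel_boundary CS (leq_trans Ck _) r0SC xS; case/andP: k12.
apply: IHt; last by lia.
have k_gt0 : 0 < k by lia.
apply/eqP => stepT.
by have := cop_notin_escape_step adj c S (Ordinal k_gt0); rewrite stepT inE.
Qed.

Lemma wheel_not_capt_within k m t : 0 < k <= 2 -> 3 + (k - 1) * t <= p ->
  #|V| ^ t.+1 <= m -> ~ capt_within adj k m t.
Proof.
move=> k12 le_tp le_m; apply: (escapes_not_capt_within wheel_adj_refl _ le_m) => c.
have k_gt0 : 0 < k by lia.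
apply: escapes_wheel => //.
  apply/eqP => CT; have := cop_in_cop_set c (Ordinal k_gt0).
  by rewrite -[cop_set c]setCK CT setCT inE.
rewrite cardsCs setCK card_ord; have := card_cop_set c; nia.
Qed.

(* The first cop alternates between the hub and rim vertex 2, the second starts
   at 1 and then walks down the rim from p.  After round i the robbers are
   confined to the rim arc 3..p-i and to the vertex the first cop enters next. *)
Definition hub_cop i := if odd i then 2 else 0.
Definition rim_cop i := if i == 0 then 1 else p.+1 - i.
Definition sweep i : {ffun 'I_2 -> V} :=
  [ffun o => inord (if o == ord0 then hub_cop i else rim_cop i)].
Definition sweep_region i (v : nat) : bool :=
  (3 <= v <= p - i) || (i < p - 2) && (v == hub_cop i.+1).

Lemma val_sweep i o : sweep i o = (if o == ord0 then hub_cop i else rim_cop i) :> nat.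
Proof. by rewrite ffunE inordK // /hub_cop /rim_cop; case: ifP; case: ifP; lia. Qed.

Lemma mem_sweep i (v : V) :
  (v \in cop_set (sweep i)) = (v == hub_cop i :> nat) || (v == rim_cop i :> nat).
Proof.
rewrite mem_cop_set; apply/existsP/orP => [[o /eqP <-]|[] /eqP v_eq].
- by rewrite val_sweep; case: ifP => _; rewrite eqxx ?orbT; [left|right].
- by exists ord0; apply/eqP/ord_inj; rewrite val_sweep.
- by exists (@Ordinal 2 1 isT); apply/eqP/ord_inj; rewrite val_sweep.
Qed.

Lemma sweep_adj i o : adj (sweep i o) (sweep i.+1 o).
Proof.
rewrite wheel_adjE !val_sweep /hub_cop /rim_cop /=.
by case: ifP => _; case: (odd i) => /=; case: (i =P 0); lia.
Qed.

Lemma sweep_region_step i (u w : V) : i < p - 2 -> sweep_region i u ->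
  u \notin cop_set (sweep i.+1) -> w \notin cop_set (sweep i.+1) -> adj u w ->
  sweep_region i.+1 w.
Proof.
rewrite !mem_sweep wheel_adjE /sweep_region /hub_cop /rim_cop /=.
by have := ltn_ord u; have := ltn_ord w; case: (odd i) => /=; lia.
Qed.

Lemma sweep_wins m t i (r : {ffun 'I_m -> option V}) : i + t = p - 2 ->
  (forall j v, r j = Some v -> sweep_region i v) -> cops_win_within adj t (sweep i) r.
Proof.
elim: t i r => [|t IHt] i r end_i inR /=.
  by move=> j; case rj: (r j) => [v|] //; move: (inR j v rj); rewrite /sweep_region; lia.
right; exists (sweep i.+1); split; first exact: sweep_adj.
move=> rm rm_adj; apply: IHt; first lia.
move=> j w /capture_Some [+ wC]; rewrite ffunE.
case cj: (capture (sweep i.+1) r j) => [v|] //= [rm_w].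
have := rm_adj j v cj; rewrite rm_w => vw.
move: cj => /capture_Some [rj vC].
by apply: sweep_region_step vC wC vw; [lia | exact: inR rj].
Qed.

Lemma capt_within_sweep m : capt_within adj 2 m (p - 2).
Proof.
exists (sweep 0) => r0; apply: sweep_wins => // j v /capture_Some [_].
by rewrite mem_sweep /sweep_region /hub_cop /rim_cop /=; have := ltn_ord v; lia.
Qed.

End Wheel.

Theorem mainTheorem16 (n : nat) (hn : 4 <= n) :
  ~ strong_k_cop_win (wheel_adj n) 1 /\
  strong_k_cop_win (wheel_adj n) 2 /\
  capt_limit (wheel_adj n) 2 (n - 3).
Proof.
case: n hn => [//|p] p_ge3; rewrite subSS.
have limit2 : capt_limit (wheel_adj p.+1) 2 (p - 2).
  exists (#|'I_p.+1| ^ (p - 2)) => m le_m; split; first exact: capt_within_sweep.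
  move=> t lt_t; apply: wheel_not_capt_within => //; first lia.
  by rewrite (leq_trans _ le_m) // leq_pexp2l // card_ord.
split.
  case=> _ [L [M captL]].
  have [+ _] := captL (maxn M (#|'I_p.+1| ^ L.+1)) (leq_maxl _ _).
  by apply: wheel_not_capt_within (leq_maxr _ _) => //; lia.
split=> //; split; last by exists (p - 2).
by exists (p - 2); apply: capt_within_sweep.
Qed.
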